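(* Let $p\ge1$, $q\ge0$, and for $i=1,\dots,r$ let $f_i:\mathbb{R}^p\times\mathbb{R}^q\to\mathbb{R}$ be permutation-invariant with respect to its first argument. Let $\bar S=\{(M,z)\in\mathcal{S}^p\times\mathbb{R}^q\mid f_i(\lambda(M),z)\le1,\ i=1,\dots,r\}$ and $S=\{(x,z)\in\mathbb{R}^p\times\mathbb{R}^q\mid f_i(x,z)\le1,\ i=1,\dots,r\}$. Then $$\mathrm{conv}(\bar S)=\{(M,z)\in\mathcal{S}^p\times\mathbb{R}^q\mid(\lambda(M),z)\in\mathrm{conv}(S)\}.$$
   Context: $\mathcal{S}^p$ is the space of real symmetric $p\times p$ matrices and $\lambda(M)\in\mathbb{R}^p$ is the vector of eigenvalues of $M$ in nonincreasing order. $f(x,z)$ is permutation-invariant with respect to $x$ if $f(Px,z)=f(x,z)$ for every permutation matrix $P$. *)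

From HB Require Import structures.
From mathcomp Require Import all_boot all_order all_algebra all_fingroup.
From Stdlib Require Import ClassicalEpsilon.
Set Implicit Arguments. Unset Strict Implicit. Unset Printing Implicit Defensive.
Import Order.TTheory GRing.Theory Num.Theory.
Local Open Scope ring_scope.

(* This determines l uniquely when it exists. *)
Definition is_eigvec_sorted (R : rcfType) (p : nat) (M : 'M[R]_p) (l : 'rV[R]_p) : Prop :=
  char_poly M = \prod_(i < p) ('X - (l 0 i)%:P)
  /\ (forall i j : 'I_p, (i <= j)%N -> l 0 j <= l 0 i).

(* lambda(M): the nonincreasingly ordered eigenvalue vector (chosen by epsilon;
   for real symmetric M it exists and is unique). *)
Definition eigv (R : rcfType) (p : nat) (M : 'M[R]_p) : 'rV[R]_p :=
  epsilon (inhabits 0) (fun l => is_eigvec_sorted M l).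

Definition conv (R : realFieldType) (V : lmodType R) (A : V -> Prop) (v : V) : Prop :=
  exists (n : nat) (w : 'I_n -> R) (a : 'I_n -> V),
    (forall k, 0 <= w k) /\ \sum_(k < n) w k = 1 /\ (forall k, A (a k))
    /\ v = \sum_(k < n) w k *: a k.

Definition Sbar (R : rcfType) (p q r : nat) (f : 'I_r -> 'rV[R]_p -> 'rV[R]_q -> R)
  (P : 'M[R]_p * 'rV[R]_q) : Prop :=
  P.1^T = P.1 /\ forall i, f i (eigv P.1) P.2 <= 1.

Definition Sset (R : rcfType) (p q r : nat) (f : 'I_r -> 'rV[R]_p -> 'rV[R]_q -> R)
  (P : 'rV[R]_p * 'rV[R]_q) : Prop :=
  forall i, f i P.1 P.2 <= 1.

From HB Require Import structures.
From mathcomp Require Import all_boot all_order all_algebra all_fingroup.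
From mathcomp Require Import zify ring lra.
From mathcomp Require Import complex.
From Stdlib Require Import ClassicalEpsilon.
Import Order.TTheory GRing.Theory Num.Theory.
Set Implicit Arguments. Unset Strict Implicit. Unset Printing Implicit Defensive.
Local Open Scope ring_scope.

(* Diagonalize M = Q^T diag(d) Q with Q orthogonal; then lambda(M) is a permutation of d.
   If M = sum_k w_k M_k with (M_k, z_k) in S-bar, then d_i = (Q M Q^T)_ii is the
   w-average of the diagonals of the conjugates Q M_k Q^T.  The diagonal of V diag(e) V^T
   (V orthogonal) is D e for the doubly stochastic matrix D = (V_ij^2), hence by Birkhoff's
   theorem a convex combination of permutations of e; by permutation invariance all these
   points, paired with z_k, lie in S.  Conversely a convex decomposition
   (lambda(M), z) = sum_k w_k (x_k, z_k) in S lifts to M = sum_k w_k Q^T diag(x_k') Q with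
   x_k' a permutation of x_k, and each summand lies in S-bar. *)

Lemma conv_finsum (R : realFieldType) (V : lmodType R) (A : V -> Prop)
    (I : finType) (w : I -> R) (a : I -> V) :
  (forall i, 0 <= w i) -> \sum_i w i = 1 -> (forall i, A (a i)) ->
  conv A (\sum_i w i *: a i).
Proof.
move=> w0 w1 aA; exists #|I|, (fun k => w (enum_val k)), (fun k => a (enum_val k)).
do !split=> //; first by rewrite -(big_enum_val (fun i => w i)).
by rewrite -(big_enum_val (fun i => w i *: a i)).
Qed.

Lemma conv_finsum2 (R : realFieldType) (V : lmodType R) (A : V -> Prop)
    (I J : finType) (w : I -> R) (mu : I -> J -> R) (a : I -> J -> V) :
  (forall i, 0 <= w i) -> \sum_i w i = 1 ->
  (forall i j, 0 <= mu i j) -> (forall i, \sum_j mu i j = 1) ->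
  (forall i j, A (a i j)) ->
  conv A (\sum_i w i *: \sum_j mu i j *: a i j).
Proof.
move=> w0 w1 mu0 mu1 aA.
under eq_bigr do rewrite scaler_sumr; under eq_bigr do under eq_bigr do rewrite scalerA.
rewrite pair_bigA; apply: conv_finsum => [[i j]|//|[i j]] /=; last exact: aA.
  exact: mulr_ge0.
rewrite -(pair_bigA _ (fun i j => w i * mu i j)) -w1.
by apply: eq_bigr => i _; rewrite -mulr_sumr mu1 mulr1.
Qed.

Lemma sum_pair (R : pzRingType) (U V : lmodType R) (I : finType) (w : I -> R)
    (x : I -> U) (y : I -> V) :
  \sum_i w i *: ((x i, y i) : U * V) = (\sum_i w i *: x i, \sum_i w i *: y i).
Proof. by rewrite [LHS]surjective_pairing !raddf_sum. Qed.

Section HallMarriage.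
Variables (T U : finType) (u0 : U).
Implicit Types (rel : T -> U -> bool) (A B X : {set T}).

Definition nbh rel A : {set U} := [set y | [exists x in A, rel x y]].

Definition hall_condition rel X :=
  forall A, A \subset X -> (#|A| <= #|nbh rel A|)%N.

Definition has_matching rel X :=
  exists g : T -> U, {in X &, injective g} /\ {in X, forall x, rel x (g x)}.

Lemma nbhP rel A y : reflect (exists2 x, x \in A & rel x y) (y \in nbh rel A).
Proof.
by rewrite inE; apply: (iffP existsP) => [[x /andP[]]|[x xA rxy]]; exists x; rewrite ?xA.
Qed.

Lemma nbhU rel A B : nbh rel (A :|: B) = nbh rel A :|: nbh rel B.
Proof.
apply/setP => y; rewrite in_setU; apply/nbhP/orP => [[x]|[]/nbhP[x xA rxy]].
  by rewrite inE => /orP[] xA rxy; [left|right]; apply/nbhP; exists x.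
all: by exists x; rewrite // inE xA ?orbT.
Qed.

Lemma has_matching_glue rel X A (g1 g2 : T -> U) :
  {in A &, injective g1} -> {in A, forall x, rel x (g1 x)} ->
  {in X :\: A &, injective g2} -> {in X :\: A, forall x, rel x (g2 x)} ->
  {in A & X :\: A, forall a x, g1 a != g2 x} -> has_matching rel X.
Proof.
move=> g1i g1r g2i g2r g12.
have inD x : x \in X -> x \notin A -> x \in X :\: A by rewrite inE => -> ->.
exists (fun x => if x \in A then g1 x else g2 x); split; last first.
  by move=> x xX /=; case: ifPn => xA; [apply: g1r | apply/g2r/inD].
move=> x y xX yX /=; case: ifPn => xA; case: ifPn => yA.
- exact: g1i.
- by move=> e; have := g12 x y xA (inD y yX yA); rewrite e eqxx.
- by move=> e; have := g12 y x yA (inD x xX xA); rewrite e eqxx.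
- exact/g2i/inD/yA/yX/inD.
Qed.

Section Step.
Variable n : nat.
Hypothesis IH : forall rel X, (#|X| < n)%N -> hall_condition rel X -> has_matching rel X.

(* A nonempty proper subset A with |N(A)| = |A| is matched inside N(A); the rest of
   X is matched outside N(A). *)
Lemma hall_tight_step rel X A :
  (#|X| <= n)%N -> hall_condition rel X -> A \subset X -> A != set0 -> A != X ->
  (#|nbh rel A| <= #|A|)%N -> has_matching rel X.
Proof.
move=> Xn hX AX A0 AX' NA.
have ltAX : (#|A| < #|X|)%N by rewrite proper_card // properEneq AX' AX.
have [g1 [g1i g1r]] : has_matching rel A.
  apply: IH; first exact: leq_trans ltAX Xn.
  by move=> B BA; apply/hX/(subset_trans BA).
pose rel' x y := rel x y && (y \notin nbh rel A).
have [g2 [g2i g2r]] : has_matching rel' (X :\: A).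
  apply: IH.
    by rewrite cardsD (setIidPr AX); have := card_gt0 A; rewrite A0; lia.
  move=> B BXA; have BX := subset_trans BXA (subsetDl X A).
  have AB : A :&: B = set0.
    by apply/setP => x; rewrite !inE; apply/andP => -[xA /(subsetP BXA)]; rewrite inE xA.
  have := hX (A :|: B); rewrite subUset AX BX cardsU AB cards0 subn0.
  rewrite nbhU => /(_ isT) le_AB_N.
  have N_sub : nbh rel A :|: nbh rel B \subset nbh rel A :|: nbh rel' B.
    apply/subsetP => y; rewrite !in_setU; case: (boolP (y \in nbh rel A)) => //= yNA.
    by case/nbhP=> x xB rxy; apply/nbhP; exists x; rewrite // /rel' rxy.
  have := leq_trans le_AB_N (leq_trans (subset_leq_card N_sub) (leq_card_setU _ _)).
  lia.
apply: (has_matching_glue g1i g1r g2i) => [x /g2r /andP[]//|a x aA /g2r /andP[_]].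
by apply: contraNneq => <-; apply/nbhP; exists a; rewrite ?g1r.
Qed.

(* With no tight nonempty proper subset, any edge x0 y0 can be used: the rest of X is
   matched avoiding y0. *)
Lemma hall_loose_step rel X :
  (#|X| <= n)%N -> hall_condition rel X ->
  (forall A, A \subset X -> A != set0 -> A != X -> (#|A| < #|nbh rel A|)%N) ->
  has_matching rel X.
Proof.
move=> Xn hX hA; case: (set_0Vmem X) => [->|[x0 x0X]].
  by exists (fun=> u0); split=> x; rewrite inE.
have /card_gt0P[y0 /nbhP[_ /set1P-> rxy0]] : (0 < #|nbh rel [set x0]|)%N.
  by apply: leq_trans (hX _ _); rewrite ?cards1 ?sub1set.
pose rel' x y := rel x y && (y != y0).
have [g2 [g2i g2r]] : has_matching rel' (X :\: [set x0]).
  apply: IH; first by move: Xn; rewrite (cardsD1 x0 X) x0X.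
  move=> B BX; case: (set_0Vmem B) => [->|[b bB]]; first by rewrite cards0.
  have BX' := subset_trans BX (subsetDl X _).
  have B0 : B != set0 by apply/set0Pn; exists b.
  have BX'' : B != X.
    by apply: contraTneq BX => ->; apply/subsetPn; exists x0; rewrite // !inE eqxx.
  have N_sub : nbh rel B \subset y0 |: nbh rel' B.
    apply/subsetP => y /nbhP[x xB rxy]; rewrite in_setU1; case: eqP => //= /eqP ny.
    by apply/nbhP; exists x; rewrite // /rel' rxy.
  have := leq_trans (hA B BX' B0 BX'') (subset_leq_card N_sub).
  have := (leq_card_setU [set y0] (nbh rel' B)).1; rewrite cards1; lia.
apply: (has_matching_glue (g1 := fun=> y0) _ _ g2i) => [x y /set1P-> /set1P->//|x /set1P->//||].
  by move=> x /g2r /andP[].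
by move=> a x _ /g2r /andP[_]; rewrite eq_sym.
Qed.

End Step.

Theorem hall_marriage rel X : hall_condition rel X -> has_matching rel X.
Proof.
have [n] := ubnP #|X|; elim: n rel X => // n IH rel X Xn hX.
case: (boolP [exists A : {set T}, [&& A \subset X, A != set0, A != X &
                                    (#|nbh rel A| <= #|A|)%N]]).
  case/existsP => A /and4P[AX A0 AX' NA].
  exact: (hall_tight_step IH Xn hX AX A0 AX' NA).
move/existsPn => hA; apply: (hall_loose_step IH Xn hX).
by move=> A AX A0 AX'; have := hA A; rewrite AX A0 AX' /= ltnNge.
Qed.

End HallMarriage.

Section Birkhoff.
Variables (R : realFieldType) (n : nat).
Implicit Types (D : 'M[R]_n) (c : R).

Definition doubly_stochastic_with c D :=
  [/\ forall i j, 0 <= D i j, forall i, \sum_j D i j = c & forall j, \sum_i D i j = c].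

Definition mxsupport D := [set ij : 'I_n * 'I_n | D ij.1 ij.2 != 0].

Lemma perm_mxE (s : 'S_n) i j : perm_mx s i j = (s i == j)%:R :> R.
Proof. by rewrite /perm_mx !mxE. Qed.

Lemma doubly_stochastic_perm_mx (s : 'S_n) : doubly_stochastic_with 1 (perm_mx s).
Proof.
split=> [i j|i|j]; first by rewrite perm_mxE ler0n.
  rewrite (bigD1 (s i)) //= perm_mxE eqxx big1 ?addr0 // => j ne.
  by rewrite perm_mxE eq_sym (negbTE ne).
rewrite (bigD1 (s^-1 j)%g) //= perm_mxE permKV eqxx big1 ?addr0 // => i ne.
by rewrite perm_mxE; case: eqP => // e; rewrite -e permK eqxx in ne.
Qed.

(* Hall's condition holds for the positive entries: the mass c |A| of the rows in A
   sits in the columns of N(A), whose total mass is c |N(A)|. *)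
Lemma doubly_stochastic_perm_support D c :
  doubly_stochastic_with c D -> 0 < c -> exists s : 'S_n, forall i, 0 < D i (s i).
Proof.
move=> [D0 Dr Dc] c0; case: (pickP (fun _ : 'I_n => true)) => [i0 _|n0]; last first.
  by exists 1%g => i; have := n0 i.
pose rel i j := 0 < D i j.
have hall : hall_condition rel [set: 'I_n].
  move=> A _; rewrite -(ler_nat R) -(ler_pM2r c0) !mulr_natl -!sumr_const.
  rewrite -(eq_bigr _ (fun i _ => Dr i)) -(eq_bigr _ (fun j _ => Dc j)).
  apply: le_trans (_ : \sum_(i in A) \sum_(j in nbh rel A) D i j <= _).
    apply: ler_sum => i iA; rewrite [leLHS](bigID (mem (nbh rel A))) /= addrC.
    rewrite big1 ?add0r // => j /negP jN; apply/eqP; rewrite eq_le D0 andbT leNgt.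
    by apply/negP => Dij; apply: jN; apply/nbhP; exists i.
  rewrite exchange_big /=; apply: ler_sum => j _.
  by rewrite [leRHS](bigID (mem A)) /= lerDl sumr_ge0.
have [g [gi gr]] := hall_marriage i0 hall.
have ginj : injective g by move=> x y; apply: gi; rewrite inE.
by exists (perm ginj) => i; rewrite permE; apply: gr; rewrite inE.
Qed.

(* Peel off the permutation matrix s weighted by the smallest of the entries D i (s i). *)
Lemma birkhoff_step D c :
  doubly_stochastic_with c D -> D != 0 ->
  exists (m : R) (s : 'S_n), [/\ 0 < m, doubly_stochastic_with (c - m) (D - m *: perm_mx s)
                               & (#|mxsupport (D - m *: perm_mx s)| < #|mxsupport D|)%N].
Proof.
move=> [D0 Dr Dc] /eqP D_neq0.
have [[i1 j1] nz1] : exists ij : 'I_n * 'I_n, D ij.1 ij.2 != 0.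
  apply/existsP; apply: contra_notT D_neq0 => /existsPn z.
  by apply/matrixP => i j; rewrite mxE; have /negPn/eqP := z (i, j).
have c0 : 0 < c.
  by rewrite -(Dr i1) (bigD1 j1) //= ltr_pwDl ?sumr_ge0 // lt_def nz1 D0.
have [s spos] := doubly_stochastic_perm_support (And3 D0 Dr Dc) c0.
have [i0 _ hmin] := @arg_minP _ _ _ i1 predT (fun i => D i (s i)) isT.
set m := D i0 (s i0) in hmin; have [P0 Pr Pc] := doubly_stochastic_perm_mx s.
exists m, s; split; first exact: spos.
- split=> [i j|i|j]; rewrite ?mxE.
  + by case: eqP => [<-|_]; rewrite ?mulr1 ?subr_ge0 ?hmin ?mulr0 ?subr0.
  + by under eq_bigr do rewrite !mxE -perm_mxE; rewrite sumrB Dr -mulr_sumr Pr mulr1.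
  + by under eq_bigr do rewrite !mxE -perm_mxE; rewrite sumrB Dc -mulr_sumr Pc mulr1.
apply: proper_card; rewrite properEneq; apply/andP; split.
  apply: contraTneq (spos i0) => e; have : (i0, s i0) \notin mxsupport D.
    by rewrite -e inE /= !mxE eqxx mulr1 subrr eqxx.
  by rewrite inE negbK /= => /eqP->; rewrite ltxx.
apply/subsetP => -[i j]; rewrite !inE /= !mxE.
by case: (eqVneq (s i) j) => [<- _|_]; rewrite ?mulr0 ?subr0 // lt0r_neq0 ?spos.
Qed.

Theorem birkhoff D c : doubly_stochastic_with c D ->
  exists mu : 'S_n -> R, (forall s, 0 <= mu s) /\ D = \sum_s mu s *: perm_mx s.
Proof.
have [k] := ubnP #|mxsupport D|; elim: k D c => // k IH D c Dk DS.
have [->|D_neq0] := eqVneq D 0.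
  by exists (fun=> 0); split=> //; rewrite big1 // => s _; rewrite scale0r.
have [m [s [m0 DS' lt_supp]]] := birkhoff_step DS D_neq0.
have [mu [mu0 eD]] := IH _ _ (leq_trans lt_supp Dk) DS'.
exists (fun t => mu t + m * (t == s)%:R); split.
  by move=> t; rewrite addr_ge0 // mulr_ge0 ?ler0n ?ltW.
rewrite -(subrK (m *: perm_mx s) D) eD.
under [RHS]eq_bigr do rewrite scalerDl.
rewrite big_split /=; congr (_ + _); rewrite (bigD1 s) //= eqxx mulr1 big1 ?addr0 // => t ts.
by rewrite (negbTE ts) mulr0 scale0r.
Qed.

End Birkhoff.

Section EuclideanRows.
Variable R : realFieldType.

Lemma dot_self_ge0 n (u : 'rV[R]_n) : 0 <= (u *m u^T) 0 0.
Proof. by rewrite mxE; apply: sumr_ge0 => k _; rewrite mxE -expr2 sqr_ge0. Qed.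

Lemma dot_self_eq0 n (u : 'rV[R]_n) : ((u *m u^T) 0 0 == 0) = (u == 0).
Proof.
apply/idP/eqP => [|->]; last by rewrite mul0mx mxE.
rewrite mxE psumr_eq0 => [/allP u0|k _]; last by rewrite mxE -expr2 sqr_ge0.
apply/rowP => k; have := u0 k (mem_index_enum _).
by rewrite !mxE -expr2 sqrf_eq0 => /eqP.
Qed.

Lemma sym_form_comm n (A : 'M[R]_n) (u w : 'rV[R]_n) :
  A^T = A -> u *m A *m w^T = w *m A *m u^T.
Proof.
move=> sA; rewrite [LHS]mx11_scalar -tr_scalar_mx -mx11_scalar.
by rewrite !trmx_mul trmxK sA mulmxA.
Qed.

(* The form (x, y) |-> x A y^T is symmetric, which forces b (|x|^2 + |y|^2) = 0. *)
Lemma sym_rotation_eq0 n (A : 'M[R]_n) (a b : R) (x y : 'rV[R]_n) :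
  A^T = A -> x *m A = a *: x - b *: y -> y *m A = b *: x + a *: y ->
  (x != 0) || (y != 0) -> b = 0.
Proof.
move=> sA xA yA xy0.
have := sym_form_comm x y (trmx1 R n); rewrite !mulmx1 => xy.
have := sym_form_comm x y sA; rewrite xA yA mulmxBl mulmxDl -!scalemxAl xy.
rewrite [x *m x^T]mx11_scalar [y *m y^T]mx11_scalar [y *m x^T]mx11_scalar.
set xx := (x *m x^T) 0 0; set yy := (y *m y^T) 0 0; set yx := (y *m x^T) 0 0.
move/(congr1 (fun B : 'M[R]_1 => B 0 0)); rewrite !mxE eqxx !mulr1n => e.
have : b * (xx + yy) = 0.
  have -> : b * (xx + yy) = (b * xx + a * yx) - (a * yx - b * yy) by ring.
  by rewrite -e subrr.
move/eqP; rewrite mulf_eq0 paddr_eq0 ?dot_self_ge0 // !dot_self_eq0.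
by case/orP=> [/eqP//|/andP[/eqP x0 /eqP y0]]; rewrite x0 y0 eqxx in xy0.
Qed.

(* The reflection in the hyperplane orthogonal to w = u - e_0 swaps e_0 and u. *)
Lemma householder n (u : 'rV[R]_n.+1) : u *m u^T = 1%:M ->
  exists H : 'M[R]_n.+1, H *m H^T = 1%:M /\ delta_mx 0 0 *m H = u.
Proof.
move=> uu; set e : 'rV[R]_n.+1 := delta_mx 0 0.
have [->|ne] := eqVneq u e; first by exists 1%:M; rewrite trmx1 !mulmx1.
pose w := u - e; pose c := (w *m w^T) 0 0.
have ee : e *m e^T = 1%:M.
  by rewrite -rowE; apply/rowP => k; rewrite (ord1 k) !mxE.
have eu : e *m u^T = (u 0 0)%:M.
  by rewrite -rowE; apply/rowP => k; rewrite (ord1 k) !mxE eqxx mulr1n.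
have ue : u *m e^T = (u 0 0)%:M by rewrite -[LHS]trmxK trmx_mul trmxK eu tr_scalar_mx.
have ww : w *m w^T = (2 - 2 * u 0 0)%:M.
  rewrite /w linearB /= mulmxBl !mulmxBr uu ee eu ue.
  by apply/matrixP => i j; rewrite !mxE; ring.
have cE : c = 2 - 2 * u 0 0 by rewrite /c ww mxE eqxx mulr1n.
have c0 : c != 0 by rewrite dot_self_eq0 subr_eq0.
pose W := w^T *m w.
have WW : W *m W = c *: W by rewrite mulmxA -(mulmxA w^T) ww cE mul_mx_scalar scalemxAl.
have WT : W^T = W by rewrite trmx_mul trmxK.
exists (1%:M - (2 / c) *: W); split.
  rewrite [(_ - _)^T]linearB /= [(_ *: W)^T]linearZ /= trmx1 WT mulmxBl !mulmxBr mulmx1 mul1mx.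
  rewrite -!scalemxAl -!scalemxAr scalerA WW scalerA.
  have -> : 2 / c * (2 / c) * c = 2 * (2 / c) by field.
  by rewrite mulmx1; apply/matrixP => i j; rewrite !mxE; ring.
have ew : e *m w^T = (u 0 0 - 1)%:M.
  by rewrite /w linearB /= mulmxBr eu ee; apply/matrixP => i j; rewrite !mxE; ring.
rewrite mulmxBr mulmx1 -scalemxAr /W mulmxA ew mul_scalar_mx scalerA.
have -> : 2 / c * (u 0 0 - 1) = - 1.
  rewrite cE; field; move: c0; rewrite cE; apply: contra => /eqP h; apply/eqP; lra.
by rewrite scaleN1r opprK /w addrC subrK.
Qed.

End EuclideanRows.

Section RealSymmetric.
Variable R : rcfType.

(* Theorem7' provides a complex eigenpair (c, v); A acts on the real and imaginary parts
   of v as multiplication by c on R^2, so sym_rotation_eq0 makes c real. *)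
Lemma sym_eigenvector n (A : 'M[R]_n.+1) : A^T = A ->
  exists (a : R) (x : 'rV[R]_n.+1), x != 0 /\ x *m A = a *: x.
Proof.
move=> sA; have [c] := @Theorem7' R n.+1 (map_mx (real_complex R) A) isT.
case/eigenvalueP => v vA v0.
pose x := \row_k complex.Re (v 0 k); pose y := \row_k complex.Im (v 0 k).
have vAk k : \sum_j v 0 j * ((A j k)%:C)%C = c * v 0 k.
  have := congr1 (fun B : 'rV[R[i]]_n.+1 => B 0 k) vA; rewrite !mxE => <-.
  by apply: eq_bigr => j _; rewrite mxE.
have ReS (F : 'I_n.+1 -> R[i]) : complex.Re (\sum_j F j) = \sum_j complex.Re (F j).
  by apply: big_morph => // -[? ?] [? ?].
have ImS (F : 'I_n.+1 -> R[i]) : complex.Im (\sum_j F j) = \sum_j complex.Im (F j).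
  by apply: big_morph => // -[? ?] [? ?].
have xA : x *m A = complex.Re c *: x - complex.Im c *: y.
  apply/rowP => k; have := congr1 (@complex.Re R) (vAk k); rewrite ReS !mxE => e.
  rewrite (eq_bigr (fun j => complex.Re (v 0 j * ((A j k)%:C)%C))) ?e.
    by case: (c) (v 0 k) => [? ?] [? ?].
  by move=> j _; rewrite mxE; case: (v 0 j) => [? ?] /=; rewrite mulr0 subr0.
have yA : y *m A = complex.Im c *: x + complex.Re c *: y.
  apply/rowP => k; have := congr1 (@complex.Im R) (vAk k); rewrite ImS !mxE => e.
  rewrite (eq_bigr (fun j => complex.Im (v 0 j * ((A j k)%:C)%C))) ?e.
    by case: (c) (v 0 k) => [? ?] [? ?] /=; rewrite addrC.
  by move=> j _; rewrite mxE; case: (v 0 j) => [? ?] /=; rewrite mulr0 add0r.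
have xy0 : (x != 0) || (y != 0).
  move: v0; apply: contraNT => /norP[/negPn/eqP x0 /negPn/eqP y0]; apply/eqP/rowP => k.
  have := congr1 (fun B : 'rV[R]_n.+1 => B 0 k) x0.
  have := congr1 (fun B : 'rV[R]_n.+1 => B 0 k) y0.
  by rewrite !mxE; case: (v 0 k) => ? ? /= -> ->.
have c_real := sym_rotation_eq0 sA xA yA xy0.
rewrite c_real scale0r subr0 in xA; rewrite c_real scale0r add0r in yA.
by case/orP: xy0 => ?; [exists (complex.Re c), x | exists (complex.Re c), y].
Qed.


Lemma sym_deflation n (A : 'M[R]_(1 + n)) : A^T = A ->
  exists (H : 'M[R]_(1 + n)) (a : R) (A' : 'M[R]_n),
    [/\ H *m H^T = 1%:M, A'^T = A' & H *m A *m H^T = block_mx a%:M 0 0 A'].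
Proof.
move=> sA; have [a [x [x0 xA]]] := sym_eigenvector sA.
set s := (x *m x^T) 0 0.
have s0 : 0 < s by rewrite lt_def dot_self_eq0 x0 dot_self_ge0.
pose u := (Num.sqrt s)^-1 *: x.
have uu : u *m u^T = 1%:M.
  rewrite linearZ /= -scalemxAl -scalemxAr scalerA [x *m x^T]mx11_scalar -/s.
  rewrite -invrM ?unitfE ?sqrtr_eq0 -?ltNge // -expr2 sqr_sqrtr ?ltW //.
  by rewrite scale_scalar_mx mulVf // gt_eqF.
have [H [HH eH]] := householder uu.
have HH' : H^T *m H = 1%:M by apply: mulmx1C.
set B : 'M[R]_(1 + n) := H *m A *m H^T.
have sB : B^T = B by rewrite !trmx_mul trmxK sA mulmxA.
have uA : u *m A = a *: u by rewrite -scalemxAl xA !scalerA mulrC.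
have eB : (delta_mx 0 0 : 'rV[R]_(1 + n)) *m B = a *: delta_mx 0 0.
  by rewrite /B !mulmxA eH uA -scalemxAl -eH -mulmxA HH mulmx1.
have B0 j : B 0 j = a * (j == 0)%:R.
  by have := congr1 (fun N : 'rV[R]_(1 + n) => N 0 j) eB; rewrite -rowE !mxE eqxx eq_sym.
have BE : H *m A *m H^T = B by [].
clearbody B.
have ur : ursubmx B = 0.
  apply/matrixP => i j; rewrite !mxE (ord1 i) [lshift _ _](_ : _ = 0); last exact/val_inj.
  by rewrite B0 mulr0.
exists H, a, (drsubmx B); split=> //; first by rewrite trmx_drsub sB.
rewrite BE -{1}(submxK B) ur; congr block_mx; last by rewrite -[B]sB -trmx_ursub ur trmx0.
apply/matrixP => i j; rewrite !mxE (ord1 i) (ord1 j) [lshift _ _](_ : _ = 0) ?B0 //.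
  by rewrite eqxx mulr1 mulr1n.
exact/val_inj.
Qed.

Lemma block_diag_conj n (a : R) (H A : 'M[R]_(1 + n)) (Q' : 'M_n) (d' : 'rV_n) :
  H *m H^T = 1%:M -> Q' *m Q'^T = 1%:M ->
  H *m A *m H^T = block_mx a%:M 0 0 (Q'^T *m diag_mx d' *m Q') ->
  let Q := block_mx 1%:M 0 0 Q' *m H in
  Q *m Q^T = 1%:M /\ A = Q^T *m diag_mx (row_mx (a%:M : 'rV_1) d') *m Q.
Proof.
move=> HH QQ' BE Q; have HH' : H^T *m H = 1%:M by apply: mulmx1C.
split.
  rewrite /Q trmx_mul tr_block_mx !trmx0 trmx1 mulmxA -(mulmxA _ H) HH mulmx1.
  by rewrite mulmx_block !mulmx0 !mul0mx !addr0 !add0r mulmx1 QQ' -scalar_mx_block.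
rewrite /Q trmx_mul tr_block_mx !trmx0 trmx1 diag_mx_row.
have -> : diag_mx (a%:M : 'rV[R]_1) = a%:M.
  by apply/matrixP => i j; rewrite (ord1 i) (ord1 j) !mxE.
rewrite !mulmxA -(mulmxA H^T) mulmx_block !mulmx0 !mul0mx !addr0 !add0r mul1mx.
rewrite -(mulmxA H^T) mulmx_block !mulmx0 !mul0mx !addr0 !add0r mulmx1 -BE.
by rewrite !mulmxA HH' mul1mx -mulmxA HH' mulmx1.
Qed.

Theorem sym_spectral n (A : 'M[R]_n) : A^T = A ->
  exists (Q : 'M[R]_n) (d : 'rV[R]_n), Q *m Q^T = 1%:M /\ A = Q^T *m diag_mx d *m Q.
Proof.
elim: n A => [|n IH] A sA.
  by exists 1%:M, 0; split; [rewrite trmx1 mulmx1 | apply/matrixP => -[]].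
have [H [a [A' [HH sA' BE]]]] := sym_deflation (sA : (A : 'M_(1 + n))^T = A).
have [Q' [d' [QQ' eA']]] := IH A' sA'; rewrite eA' in BE.
by exists (block_mx 1%:M 0 0 Q' *m H), (row_mx (a%:M : 'rV_1) d'); apply: block_diag_conj.
Qed.

End RealSymmetric.

Lemma char_poly_conj_diag (R : comNzRingType) n (Q : 'M[R]_n) (d : 'rV[R]_n) :
  Q^T *m Q = 1%:M -> char_poly (Q^T *m diag_mx d *m Q) = \prod_(i < n) ('X - (d 0 i)%:P).
Proof.
move=> QQ; pose P := map_mx polyC Q.
have PP : P^T *m P = 1%:M by rewrite map_trmx -map_mxM QQ map_mx1.
have e : char_poly_mx (Q^T *m diag_mx d *m Q) = P^T *m char_poly_mx (diag_mx d) *m P.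
  rewrite /char_poly_mx !map_mxM -map_trmx -/P mulmxBr mulmxBl.
  by rewrite mul_mx_scalar -scalemxAl PP scale_scalar_mx mulr1.
rewrite /char_poly e !det_mulmx mulrAC -det_mulmx PP det1 mul1r.
rewrite -/(char_poly (diag_mx d)) char_poly_trig ?diag_mx_is_trig //.
by apply: eq_bigr => i _; rewrite mxE eqxx.
Qed.

Section SortedEigenvalues.
Variable R : rcfType.

Lemma eigv_sorted n (M : 'M[R]_n) :
  (exists l, is_eigvec_sorted M l) -> is_eigvec_sorted M (eigv M).
Proof. exact: epsilon_spec. Qed.

Lemma prod_XsubC_row n (e : 'rV[R]_n) :
  \prod_(i < n) ('X - (e 0 i)%:P) = \prod_(x <- [seq e 0 i | i <- enum 'I_n]) ('X - x%:P).
Proof. by rewrite big_map big_enum. Qed.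

Lemma is_eigvec_sorted_conj_diag n (Q : 'M[R]_n) (d : 'rV[R]_n) :
  Q^T *m Q = 1%:M -> exists l, is_eigvec_sorted (Q^T *m diag_mx d *m Q) l.
Proof.
move=> QQ; set sd := [seq d 0 i | i <- enum 'I_n].
pose t := sort (fun x y : R => y <= x) sd.
have st : size t = n by rewrite size_sort size_map size_enum_ord.
have pt : perm_eq t sd by apply/permEl/perm_sort.
exists (\row_i nth 0 t i); split.
  rewrite char_poly_conj_diag // [LHS]prod_XsubC_row -/sd -(perm_big _ pt).
  by rewrite (big_nth 0) st big_mkord; apply: eq_bigr => i _; rewrite mxE.
move=> i j ij; rewrite !mxE; apply: (sorted_leq_nth (leT := fun x y : R => y <= x)) => //.
- by move=> x y z /= yx zy; apply: le_trans zy yx.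
- by apply: sort_sorted => x y; apply: le_total.
- by rewrite inE st.
- by rewrite inE st.
Qed.

Lemma eigv_conj_diag n (Q : 'M[R]_n) (d : 'rV[R]_n) :
  Q *m Q^T = 1%:M -> exists s : 'S_n, eigv (Q^T *m diag_mx d *m Q) = col_perm s d.
Proof.
move=> QQ; have QQ' : Q^T *m Q = 1%:M by apply: mulmx1C.
have [cpM _] := eigv_sorted (is_eigvec_sorted_conj_diag d QQ').
set e := eigv _ in cpM *; rewrite char_poly_conj_diag // in cpM.
have : perm_eq [tuple e 0 i | i < n] [tuple d 0 i | i < n].
  by apply: prod_XsubC_eq; rewrite -!prod_XsubC_row.
case/tuple_permP => s /val_inj es; exists s; apply/rowP => i; rewrite mxE.
by have := congr1 (fun t => tnth t i) es; rewrite !tnth_mktuple.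
Qed.

End SortedEigenvalues.

Definition mxdiag (R : Type) n (A : 'M[R]_n) : 'rV[R]_n := \row_i A i i.

Lemma mxdiag_diag (R : pzRingType) n (d : 'rV[R]_n) : mxdiag (diag_mx d) = d.
Proof. by apply/rowP => i; rewrite !mxE eqxx mulr1n. Qed.

Lemma mxdiag_sum (R : pzRingType) n (I : finType) (w : I -> R) (A : I -> 'M[R]_n) :
  mxdiag (\sum_k w k *: A k) = \sum_k w k *: mxdiag (A k).
Proof. by apply/rowP => i; rewrite !mxE !summxE; apply: eq_bigr => k _; rewrite !mxE. Qed.

(* Schur's observation: the diagonal of V diag(e) V^T is D e, where D = (V_ij^2) is
   doubly stochastic, hence (Birkhoff) a convex combination of permutations of e. *)
Lemma mxdiag_conj_diag (R : realFieldType) n (V : 'M[R]_n) (e : 'rV[R]_n) :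
  (0 < n)%N -> V *m V^T = 1%:M ->
  exists mu : 'S_n -> R, [/\ forall s, 0 <= mu s, \sum_s mu s = 1 &
    mxdiag (V *m diag_mx e *m V^T) = \sum_s mu s *: col_perm s e].
Proof.
move=> n_gt0 VV; have VV' : V^T *m V = 1%:M by apply: mulmx1C.
pose D := \matrix_(i, j) V i j ^+ 2.
have DS : doubly_stochastic_with 1 D.
  split=> [i j|i|j]; first by rewrite mxE sqr_ge0.
    have := congr1 (fun B : 'M[R]_n => B i i) VV; rewrite !mxE eqxx mulr1n => <-.
    by apply: eq_bigr => j _; rewrite !mxE expr2.
  have := congr1 (fun B : 'M[R]_n => B j j) VV'; rewrite !mxE eqxx mulr1n => <-.
  by apply: eq_bigr => i _; rewrite !mxE expr2.
have [mu [mu0 eD]] := birkhoff DS; exists mu; split=> //.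
  have [_ Dr _] := DS; rewrite -(Dr (Ordinal n_gt0)) eD.
  under [RHS]eq_bigr do rewrite summxE; rewrite [RHS]exchange_big; apply: eq_bigr => s _.
  have [_ Pr _] := @doubly_stochastic_perm_mx R n s.
  by under eq_bigr do rewrite !mxE -perm_mxE; rewrite -mulr_sumr Pr mulr1.
apply/rowP => i; rewrite mul_mx_diag !mxE summxE.
transitivity (\sum_j D i j * e 0 j).
  by apply: eq_bigr => j _; rewrite !mxE expr2 mulrAC.
rewrite eD; under eq_bigr do rewrite summxE mulr_suml.
rewrite exchange_big; apply: eq_bigr => s _ /=.
rewrite (bigD1 (s i)) //= !mxE eqxx mulr1 big1 ?addr0 // => j ne.
by rewrite !mxE eq_sym (negbTE ne) mulr0 mul0r.
Qed.

Lemma mxdiag_conj_spectral (R : realFieldType) n (Q U : 'M[R]_n) (e : 'rV[R]_n) :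
  (0 < n)%N -> Q *m Q^T = 1%:M -> U *m U^T = 1%:M ->
  exists mu : 'S_n -> R, [/\ forall s, 0 <= mu s, \sum_s mu s = 1 &
    mxdiag (Q *m (U^T *m diag_mx e *m U) *m Q^T) = \sum_s mu s *: col_perm s e].
Proof.
move=> n_gt0 QQ UU.
have -> : Q *m (U^T *m diag_mx e *m U) *m Q^T = Q *m U^T *m diag_mx e *m (Q *m U^T)^T.
  by rewrite trmx_mul trmxK !mulmxA.
apply: mxdiag_conj_diag n_gt0 _.
by rewrite trmx_mul trmxK mulmxA -(mulmxA Q) (mulmx1C UU) mulmx1 QQ.
Qed.

Section SpectralHull.
Variables (R : rcfType) (p q : nat) (S : 'rV[R]_p * 'rV[R]_q -> Prop).
Hypothesis p_gt0 : (0 < p)%N.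
Hypothesis S_perm : forall s x z, S (x, z) -> S (col_perm s x, z).

Definition spectral_lift (Mz : 'M[R]_p * 'rV[R]_q) := Mz.1^T = Mz.1 /\ S (eigv Mz.1, Mz.2).

Lemma conv_spectral_lift_sym M z : conv spectral_lift (M, z) -> M^T = M.
Proof.
case=> n [w [a [_ [_ [aS /(congr1 fst)]]]]]; rewrite raddf_sum /= => ->.
by rewrite [LHS]linear_sum; apply: eq_bigr => k _; rewrite linearZ /= (aS k).1.
Qed.

Lemma conv_spectral_lift_eigv M z : conv spectral_lift (M, z) -> conv S (eigv M, z).
Proof.
move=> hM; have sM := conv_spectral_lift_sym hM.
case: hM => n [w [a [w0 [w1 [aS eMz]]]]].
have eM : M = \sum_k w k *: (a k).1 by move: (congr1 fst eMz); rewrite raddf_sum => /= ->.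
have ez : z = \sum_k w k *: (a k).2 by move: (congr1 snd eMz); rewrite raddf_sum => /= ->.
have [Q [d [QQ dM]]] := sym_spectral sM.
have [s0 es0] := eigv_conj_diag d QQ; rewrite -dM in es0.
have /fin_all_exists[U hU] k : exists Ue : 'M[R]_p * 'rV[R]_p,
    Ue.1 *m Ue.1^T = 1%:M /\ (a k).1 = Ue.1^T *m diag_mx Ue.2 *m Ue.1.
  by have [U [e hUe]] := sym_spectral (aS k).1; exists (U, e).
have /fin_all_exists[mu hmu] k : exists mu : 'S_p -> R,
    [/\ forall s, 0 <= mu s, \sum_s mu s = 1 &
       mxdiag (Q *m (a k).1 *m Q^T) = \sum_s mu s *: col_perm s (U k).2].
  by rewrite (hU k).2; apply: mxdiag_conj_spectral (hU k).1.
have mu0 k s : 0 <= mu k s by case: (hmu k).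
have mu1 k : \sum_s mu k s = 1 by case: (hmu k).
have mu_diag k : mxdiag (Q *m (a k).1 *m Q^T) = \sum_s mu k s *: col_perm s (U k).2.
  by case: (hmu k).
pose x k s := col_perm s0 (col_perm s (U k).2).
have eigvM : eigv M = \sum_k w k *: \sum_s mu k s *: x k s.
  have dE : d = mxdiag (Q *m M *m Q^T).
    by rewrite dM !mulmxA QQ mul1mx -mulmxA QQ mulmx1 mxdiag_diag.
  rewrite es0 dE eM mulmx_sumr mulmx_suml.
  under eq_bigr do rewrite -scalemxAr -scalemxAl.
  rewrite mxdiag_sum linear_sum; apply: eq_bigr => k _.
  by rewrite linearZ /= mu_diag linear_sum; congr (_ *: _); apply: eq_bigr => s _; rewrite linearZ.
have -> : (eigv M, z) = \sum_k w k *: \sum_s mu k s *: (x k s, (a k).2).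
  under [RHS]eq_bigr do rewrite sum_pair -scaler_suml mu1 scale1r.
  by rewrite sum_pair -eigvM -ez.
apply: conv_finsum2 => // k s.
have [t et] := eigv_conj_diag (U k).2 (hU k).1; rewrite -(hU k).2 in et.
have := (aS k).2; rewrite /= et => /(S_perm t^-1).
by rewrite -col_permM mulVg col_perm1 => /(S_perm s) /(S_perm s0).
Qed.

Lemma conv_eigv_spectral_lift M z :
  M^T = M -> conv S (eigv M, z) -> conv spectral_lift (M, z).
Proof.
move=> sM [n [w [a [w0 [w1 [aS eMz]]]]]].
have eM : eigv M = \sum_k w k *: (a k).1.
  by move: (congr1 fst eMz); rewrite raddf_sum => /= ->.
have ez : z = \sum_k w k *: (a k).2 by move: (congr1 snd eMz); rewrite raddf_sum => /= ->.
have [Q [d [QQ dM]]] := sym_spectral sM.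
have [s0 es0] := eigv_conj_diag d QQ; rewrite -dM in es0.
pose y k := col_perm s0^-1 (a k).1.
have dE : d = \sum_k w k *: y k.
  rewrite -[d]col_perm1 -(mulVg s0) col_permM -es0 eM linear_sum.
  by apply: eq_bigr => k _; rewrite linearZ.
have -> : (M, z) = \sum_k w k *: (Q^T *m diag_mx (y k) *m Q, (a k).2).
  rewrite sum_pair -ez; congr pair.
  rewrite {1}dM dE linear_sum mulmx_sumr mulmx_suml; apply: eq_bigr => k _.
  by rewrite linearZ /= -scalemxAr -scalemxAl.
apply: conv_finsum => // k; split; first by rewrite !trmx_mul trmxK tr_diag_mx mulmxA.
have [t ->] := eigv_conj_diag (y k) QQ.
by apply/S_perm/S_perm; rewrite -surjective_pairing.
Qed.

Theorem conv_spectral_lift M z :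
  conv spectral_lift (M, z) <-> M^T = M /\ conv S (eigv M, z).
Proof.
split=> [hM|[sM hS]]; last exact: conv_eigv_spectral_lift.
by split; [apply: conv_spectral_lift_sym hM | apply: conv_spectral_lift_eigv].
Qed.

End SpectralHull.

Theorem mainTheorem10 (R : rcfType) (p q r : nat)
  (f : 'I_r -> 'rV[R]_p -> 'rV[R]_q -> R)
  (hp : (0 < p)%N)
  (hperm : forall (i : 'I_r) (s : 'S_p) (x : 'rV[R]_p) (z : 'rV[R]_q),
             f i (col_perm s x) z = f i x z) :
  forall (M : 'M[R]_p) (z : 'rV[R]_q),
    conv (Sbar f) (M, z) <-> (M^T = M /\ conv (Sset f) (eigv M, z)).
Proof.
have Sset_perm s x z : Sset f (x, z) -> Sset f (col_perm s x, z).
  by move=> hx i; rewrite /= hperm; apply: hx.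
exact: conv_spectral_lift hp Sset_perm.
Qed.
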